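(* Let $2\leq k<n$ and let $K\subset\mathbb{C}^n$ be a convex body such that for every complex $k$-dimensional linear subspace $P\subset\mathbb{C}^n$, the orthogonal projection of $K$ onto $P$ is symmetric. Then $K$ is symmetric.
   Context: A convex body is a compact convex subset of $\mathbb{C}^n$ with nonempty interior. $\mathbb{S}^1=\{\xi\in\mathbb{C}:|\xi|=1\}$. A set $A\subset\mathbb{C}^n$ is called symmetric if there is a translated copy $A'=A-x_0$ of $A$ such that $\xi A'=A'$ for every $\xi\in\mathbb{S}^1$. Orthogonal projections are with respect to the standard Hermitian inner product on $\mathbb{C}^n$. *)

From HB Require Import structures.
From mathcomp Require Import all_boot all_order all_algebra.
From mathcomp Require Import all_classical all_reals topology normedtype.
From mathcomp Require Import complex.
Set Implicit Arguments. Unset Strict Implicit. Unset Printing Implicit Defensive.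
Import Order.TTheory GRing.Theory Num.Theory.
Import numFieldNormedType.Exports.
Import ComplexField.
Local Open Scope ring_scope.
Local Open Scope classical_set_scope.

(* The R-linear identification C^n ~ R^(2n), z |-> (Re z, Im z);
   topological notions on C^n are transported along it. *)
Definition realify (R : realType) (n : nat) (x : 'rV[R[i]]_n) : 'rV[R]_(n + n) :=
  row_mx (map_mx (@complex.Re R) x) (map_mx (@complex.Im R) x).

Definition cconvex (R : realType) (n : nat) (K : set 'rV[R[i]]_n) : Prop :=
  forall x y t, K x -> K y -> 0 <= t <= 1 ->
    K ((t%:C)%C *: x + ((1 - t)%:C)%C *: y).

Definition convex_body (R : realType) (n : nat) (K : set 'rV[R[i]]_n) : Prop :=
  [/\ compact (@realify R n @` K), cconvex K & (interior (@realify R n @` K)) !=set0].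

Definition hdot (R : realType) (n : nat) (x y : 'rV[R[i]]_n) : R[i] :=
  \sum_(j < n) x 0 j * ((y 0 j)^*)%C.

Definition orth_proj (R : realType) (n : nat) (P : {vspace 'rV[R[i]]_n})
    (K : set 'rV[R[i]]_n) : set 'rV[R[i]]_n :=
  [set y | exists2 x, K x & (y \in P) /\ (forall z, z \in P -> hdot (x - y) z = 0)].

Definition csymmetric (R : realType) (n : nat) (A : set 'rV[R[i]]_n) : Prop :=
  exists x0 : 'rV[R[i]]_n,
    let A' := [set a - x0 | a in A] in
    forall xi : R[i], `|xi| = 1 -> [set xi *: a | a in A'] = A'.

(* For u in C^n let I(u) be the compact image of K under x |-> <x, u>.  If u
   lies in a k-dimensional subspace P whose projection of K is symmetric about
   c, then I(u) is rotation-symmetric about <c, u>.  A compact plane set has at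
   most one such centre (two centres would make it invariant under a nonzero
   translation), and since k >= 2 any u, v lie in a common P; hence the centres
   form a conjugate-linear functional, u |-> <c, u> for a single c.  Then K and
   every rotation c + xi (K - c) have the same support function, and a point
   outside K could be separated from K by a hyperplane, so K is symmetric
   about c. *)
From HB Require Import structures.
From mathcomp Require Import all_boot all_order all_algebra.
From mathcomp Require Import all_classical all_reals topology normedtype derive.
From mathcomp Require Import complex.
From mathcomp Require Import ring lra zify.
Set Implicit Arguments. Unset Strict Implicit. Unset Printing Implicit Defensive.
Import Order.TTheory GRing.Theory Num.Theory.
Import numFieldNormedType.Exports.
Import ComplexField.
Local Open Scope ring_scope.
Local Open Scope classical_set_scope.

Section EuclideanSeparation.
Variable R : realType.

Definition rdot m (r s : 'rV[R]_m) : R := \sum_(j < m) r 0 j * s 0 j.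

Lemma continuous_sum (T : topologicalType) m (F : 'I_m -> T -> R) :
  (forall i, continuous (F i)) -> continuous (fun x => \sum_i F i x).
Proof.
elim: m F => [|m IH] F cF.
  under eq_fun do rewrite big_ord0; exact: cst_continuous.
under eq_fun do rewrite big_ord_recr /=.
move=> x; apply: continuousD; last exact: cF.
exact: (IH (fun i => F (widen_ord (leqnSn m) i))).
Qed.

Lemma rdot_continuous m (s : 'rV[R]_m) : continuous (fun r : 'rV[R]_m => rdot r s).
Proof.
apply: continuous_sum => j x; apply: continuousM; first exact: coord_continuous.
exact: cst_continuous.
Qed.

Lemma rdot_subr_continuous m (s : 'rV[R]_m) :
  continuous (fun r : 'rV[R]_m => rdot (r - s) (r - s)).
Proof.
rewrite /rdot; under eq_fun do under eq_bigr do rewrite !mxE.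
apply: continuous_sum => j x.
have cj : {for x, continuous (fun r : 'rV[R]_m => r 0 j - s 0 j)}.
  by apply: continuousB; [exact: coord_continuous | exact: cst_continuous].
exact: (continuousM cj cj).
Qed.

Lemma rdotDl m (a b c : 'rV[R]_m) : rdot (a + b) c = rdot a c + rdot b c.
Proof. by rewrite /rdot -big_split; apply: eq_bigr => j _; rewrite mxE mulrDl. Qed.

Lemma rdotNl m (a c : 'rV[R]_m) : rdot (- a) c = - rdot a c.
Proof. by rewrite /rdot -sumrN; apply: eq_bigr => j _; rewrite mxE mulNr. Qed.

Lemma rdotBl m (a b c : 'rV[R]_m) : rdot (a - b) c = rdot a c - rdot b c.
Proof. by rewrite rdotDl rdotNl. Qed.

Lemma rdotZl m t (a c : 'rV[R]_m) : rdot (t *: a) c = t * rdot a c.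
Proof. by rewrite /rdot mulr_sumr; apply: eq_bigr => j _; rewrite mxE mulrA. Qed.

Lemma rdotC m (a c : 'rV[R]_m) : rdot a c = rdot c a.
Proof. by apply: eq_bigr => j _; rewrite mulrC. Qed.

Lemma rdotDr m (a b c : 'rV[R]_m) : rdot c (a + b) = rdot c a + rdot c b.
Proof. by rewrite rdotC rdotDl !(rdotC c). Qed.

Lemma rdotZr m t (a c : 'rV[R]_m) : rdot c (t *: a) = t * rdot c a.
Proof. by rewrite rdotC rdotZl rdotC. Qed.

Lemma rdot_ge0 m (a : 'rV[R]_m) : 0 <= rdot a a.
Proof. by apply: sumr_ge0 => j _; rewrite -expr2 sqr_ge0. Qed.

Lemma rdot_eq0 m (a : 'rV[R]_m) : rdot a a = 0 -> a = 0.
Proof.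
move=> /eqP; rewrite psumr_eq0 => [/allP a0|j _]; last by rewrite -expr2 sqr_ge0.
apply/matrixP => i j; rewrite mxE ord1.
by have := a0 j (mem_index_enum _); rewrite -expr2 sqrf_eq0 => /eqP.
Qed.

Lemma ge0_of_small_perturbation (a d : R) :
  0 <= d -> (forall t, 0 < t -> t <= 1 -> 0 <= a + t * d) -> 0 <= a.
Proof.
move=> d0 ha; rewrite leNgt; apply/negP => a0.
have da : 0 < d - a by lra.
pose t := - a / (d - a).
have tE : t * (d - a) = - a by rewrite /t mulfVK // gt_eqF.
have t0 : 0 < t by rewrite /t divr_gt0 // oppr_gt0.
have t1 : t <= 1 by rewrite /t ler_pdivrMr // mul1r; lra.
have := ha t t0 t1; nra.
Qed.

Definition rconvex m (K : set 'rV[R]_m) :=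
  forall x y t, K x -> K y -> 0 <= t <= 1 -> K (t *: x + (1 - t) *: y).

(* The hyperplane orthogonal to s - p, with p the point of K nearest to s. *)
Lemma compact_convex_separation m (K : set 'rV[R]_m) s :
  compact K -> rconvex K -> K !=set0 -> ~ K s ->
  exists w, forall r, K r -> rdot r w < rdot s w.
Proof.
move=> cK vK K0 Ks.
have [p pK pmin] := EVT_min_rV K0 cK (continuous_subspaceT (rdot_subr_continuous (s := s))).
rewrite inE in pK; exists (s - p) => r rK.
have obtuse : 0 <= rdot (p - s) (r - p).
  suff : 0 <= 2 * rdot (p - s) (r - p) by lra.
  apply: (ge0_of_small_perturbation (rdot_ge0 (r - p))) => t t0 t1.
  have zK : K (t *: r + (1 - t) *: p) by apply: vK => //; rewrite (ltW t0) t1.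
  have := pmin _ (mem_set zK).
  have -> : t *: r + (1 - t) *: p - s = (p - s) + t *: (r - p).
    by apply/matrixP => i j; rewrite !mxE; ring.
  move: (p - s) (r - p) => a b.
  rewrite !(rdotDl, rdotDr, rdotZl, rdotZr) (rdotC b a); nra.
have sp_gt0 : 0 < rdot (s - p) (s - p).
  rewrite lt_def rdot_ge0 andbT; apply/eqP => /rdot_eq0 /eqP.
  by rewrite subr_eq0 => /eqP sp; apply: Ks; rewrite sp.
have -> : rdot r (s - p) = rdot p (s - p) - rdot (p - s) (r - p).
  rewrite -[p - s]opprB rdotNl (rdotC (s - p)) rdotBl; ring.
have -> : rdot s (s - p) = rdot p (s - p) + rdot (s - p) (s - p).
  rewrite rdotBl; ring.
lra.
Qed.

End EuclideanSeparation.

Section Dimension.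
Variables (F : fieldType) (vT : vectType F).

Lemma exists_supv_dim (U : {vspace vT}) m : (\dim U <= m <= \dim {:vT})%N ->
  exists2 P : {vspace vT}, (U <= P)%VS & \dim P = m.
Proof.
move=> /andP[]; move Es: (m - \dim U)%N => s.
elim: s U Es => [|s IH] U Es Um mn; first by exists U => //; lia.
have /subvPn [w _ wU] : ~~ (fullv <= U)%VS.
  by apply/negP => /dimvS; lia.
have dUw : \dim (U + <[w]>)%VS = (\dim U).+1.
  have [le_U_Uw eq_U_Uw] := dimv_leqif_sup (addvSl U <[w]>).
  have le_Uw := (dimv_add_leqif U <[w]>).1.
  have : (\dim <[w]> <= 1)%N by rewrite dim_vline; case: (w != 0).
  have : \dim U != \dim (U + <[w]>)%VS.
    rewrite eq_U_Uw; apply: contra wU => /subvP; apply.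
    exact/(subvP (addvSr U _))/memv_line.
  lia.
have [P UwP dP] := IH (U + <[w]>)%VS ltac:(lia) ltac:(lia) mn.
by exists P => //; apply: subv_trans (addvSl _ _) UwP.
Qed.

Lemma dimv_add_lines (u v : vT) : (\dim (<[u]> + <[v]>)%VS <= 2)%N.
Proof.
apply: leq_trans (dimv_add_leqif _ _).1 _.
by rewrite !dim_vline; case: (u != 0); case: (v != 0).
Qed.

End Dimension.

Section Hermitian.
Variable R : realType.
Local Notation C := R[i].

Lemma hdotDl n (a b z : 'rV[C]_n) : hdot (a + b) z = hdot a z + hdot b z.
Proof. by rewrite /hdot -big_split; apply: eq_bigr => j _; rewrite mxE mulrDl. Qed.

Lemma hdot0l n (z : 'rV[C]_n) : hdot 0 z = 0.
Proof. by rewrite /hdot big1 // => j _; rewrite mxE mul0r. Qed.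

Lemma hdotNl n (a z : 'rV[C]_n) : hdot (- a) z = - hdot a z.
Proof. by rewrite /hdot -sumrN; apply: eq_bigr => j _; rewrite mxE mulNr. Qed.

Lemma hdotBl n (a b z : 'rV[C]_n) : hdot (a - b) z = hdot a z - hdot b z.
Proof. by rewrite hdotDl hdotNl. Qed.

Lemma hdotZl n c (a z : 'rV[C]_n) : hdot (c *: a) z = c * hdot a z.
Proof. by rewrite /hdot mulr_sumr; apply: eq_bigr => j _; rewrite mxE mulrA. Qed.

Lemma hdotDr n (a b z : 'rV[C]_n) : hdot z (a + b) = hdot z a + hdot z b.
Proof.
by rewrite /hdot -big_split; apply: eq_bigr => j _; rewrite mxE rmorphD mulrDr.
Qed.

Lemma hdot0r n (z : 'rV[C]_n) : hdot z 0 = 0.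
Proof. by rewrite /hdot big1 // => j _; rewrite mxE conjc0 mulr0. Qed.

Lemma hdotZr n c (a z : 'rV[C]_n) : hdot z (c *: a) = (c^*)%C * hdot z a.
Proof.
by rewrite /hdot mulr_sumr; apply: eq_bigr => j _; rewrite mxE rmorphM mulrCA.
Qed.

Lemma hdot_suml n I (r : seq I) (F : I -> 'rV[C]_n) z :
  hdot (\sum_(i <- r) F i) z = \sum_(i <- r) hdot (F i) z.
Proof. exact: (big_morph (fun x => hdot x z) (fun a b => hdotDl a b z) (hdot0l z)). Qed.

Lemma hdot_sumr n I (r : seq I) (F : I -> 'rV[C]_n) z :
  hdot z (\sum_(i <- r) F i) = \sum_(i <- r) hdot z (F i).
Proof. exact: (big_morph (hdot z) (fun a b => hdotDr a b z) (hdot0r z)). Qed.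

Lemma hdot_eq0 n (w : 'rV[C]_n) : hdot w w = 0 -> w = 0.
Proof.
move=> /eqP; rewrite /hdot psumr_eq0 => [/allP w0|j _]; last exact: mulcJ_ge0.
apply/matrixP => i j; rewrite mxE ord1.
by have := w0 j (mem_index_enum _); rewrite mulf_eq0 conjc_eq0 orbb => /eqP.
Qed.

Lemma conj_linear_hdotE n (phi : 'rV[C]_n -> C) :
  (forall u v l, phi (u + l *: v) = phi u + (l^*)%C * phi v) ->
  forall u, phi u = hdot (\row_j phi (delta_mx 0 j)) u.
Proof.
move=> phi_lin.
have phiD u v : phi (u + v) = phi u + phi v.
  by rewrite -{1}[v]scale1r phi_lin conjc1 mul1r.
have phi0 : phi 0 = 0 by apply: (addrI (phi 0)); rewrite -phiD !addr0.
have phiZ l v : phi (l *: v) = (l^*)%C * phi v.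
  by rewrite -[l *: v]add0r phi_lin phi0 add0r.
move=> u; rewrite {1}(row_sum_delta u) (big_morph phi phiD phi0) /hdot.
by apply: eq_bigr => j _; rewrite phiZ mxE mulrC.
Qed.

Lemma mulmx_gram n d (b : d.-tuple 'rV[C]_n) (a : 'rV[C]_d) j :
  (a *m \matrix_(i < d, j < d) hdot b`_i b`_j) 0 j = hdot (\sum_i a 0 i *: b`_i) b`_j.
Proof. by rewrite !mxE hdot_suml; apply: eq_bigr => i _; rewrite mxE hdotZl. Qed.

Lemma gram_unitmx n d (b : d.-tuple 'rV[C]_n) :
  free b -> \matrix_(i < d, j < d) hdot b`_i b`_j \in unitmx.
Proof.
move=> fb; rewrite -row_free_unit; apply: inj_row_free => a aM.
set w := \sum_i a 0 i *: b`_i.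
have wb (j : 'I_d) : hdot w b`_j = 0 by rewrite /w -mulmx_gram aM mxE.
have w0 : w = 0.
  by apply: hdot_eq0; rewrite {2}/w hdot_sumr big1 // => i _; rewrite hdotZr wb mulr0.
apply/matrixP => i j; rewrite ord1 mxE.
by move/freeP: fb => /(_ (fun i => a 0 i) w0 j).
Qed.

(* The coordinates of the projection solve the Gram system. *)
Lemma orth_proj_exists n (P : {vspace 'rV[C]_n}) x :
  exists2 y, y \in P & forall z, z \in P -> hdot (x - y) z = 0.
Proof.
set b := vbasis P.
have gramP := gram_unitmx (basis_free (vbasisP P)).
pose a := (\row_j hdot x b`_j) *m invmx (\matrix_(i < \dim P, j < \dim P) hdot b`_i b`_j).
exists (\sum_i a 0 i *: b`_i).
  apply: memv_suml => i _; apply/memvZ/vbasis_mem.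
  by apply: mem_nth; rewrite size_tuple.
have yb (j : 'I_(\dim P)) : hdot (x - \sum_i a 0 i *: b`_i) b`_j = 0.
  by rewrite hdotBl -mulmx_gram mulmxKV // mxE subrr.
move=> z zP; rewrite (coord_vbasis zP) hdot_sumr big1 // => i _.
by rewrite hdotZr yb mulr0.
Qed.

Lemma realifyD n (a b : 'rV[C]_n) : realify (a + b) = realify a + realify b.
Proof. by rewrite /realify !map_mxD add_row_mx. Qed.

Lemma realifyZ n t (a : 'rV[C]_n) : realify ((t%:C)%C *: a) = t *: realify a.
Proof.
rewrite /realify scale_row_mx; congr row_mx; apply/matrixP => i j; rewrite !mxE;
  by case: (a i j) => x y /=; ring.
Qed.

Lemma realify_inj n : injective (@realify R n).
Proof.
move=> a b /eq_row_mx [/matrixP ab1 /matrixP ab2]; apply/matrixP => i j.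
move: (ab1 i j) (ab2 i j); rewrite !mxE.
by case: (a i j) => x y; case: (b i j) => x' y' /= -> ->.
Qed.

Lemma realify_surj n (w : 'rV[R]_(n + n)) : exists u : 'rV[C]_n, realify u = w.
Proof.
exists (\row_j (lsubmx w 0 j +i* rsubmx w 0 j)%C).
by rewrite /realify -[RHS]hsubmxK; congr row_mx; apply/matrixP => i j; rewrite !mxE ord1.
Qed.

Lemma Re_hdot n (x u : 'rV[C]_n) :
  complex.Re (hdot x u) = rdot (realify x) (realify u).
Proof.
rewrite /hdot /rdot big_split_ord raddf_sum /= -big_split /=; apply: eq_bigr => j _.
rewrite /realify !row_mxEl !row_mxEr !mxE.
by case: (x 0 j) => a b; case: (u 0 j) => c d /=; ring.
Qed.

Lemma rconvex_realify n (K : set 'rV[C]_n) : cconvex K -> rconvex (@realify R n @` K).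
Proof.
move=> cK _ _ t [x Kx <-] [y Ky <-] ht.
exists ((t%:C)%C *: x + ((1 - t)%:C)%C *: y); first exact: cK.
by rewrite realifyD !realifyZ.
Qed.

Lemma Re_conjM_addr (w z : C) : w != 0 ->
  complex.Re ((w^*)%C * z) < complex.Re ((w^*)%C * (z + w)).
Proof.
case: w => a b; case: z => c d; rewrite eq_complex /= negb_and => w0.
suff : 0 < a ^+ 2 + b ^+ 2 by nra.
by case/orP: w0 => [a0 | b0]; [apply: ltr_pwDl | apply: ltr_wpDl];
  rewrite ?sqr_ge0 // exprn_even_gt0.
Qed.

End Hermitian.

Section Centres.
Variable R : realType.
Local Notation C := R[i].

Definition sym_about (A : set C) (a : C) :=
  forall z xi, `|xi| = 1 -> A z -> A (a + xi * (z - a)).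

Definition hdot_image n (K : set 'rV[C]_n) (u : 'rV[C]_n) := [set hdot x u | x in K].

Lemma sym_about_hdot_image_orth_proj n (P : {vspace 'rV[C]_n}) (K : set 'rV[C]_n) c u :
  (forall xi : C, `|xi| = 1 ->
     [set xi *: a | a in [set a - c | a in orth_proj P K]] =
     [set a - c | a in orth_proj P K]) ->
  u \in P -> sym_about (hdot_image K u) (hdot c u).
Proof.
move=> symP uP z xi xi1 [x Kx <-].
have [y yP xy_perp] := orth_proj_exists P x.
have : [set xi *: a | a in [set a - c | a in orth_proj P K]] (xi *: (y - c)).
  by exists (y - c) => //; exists y => //; exists x.
rewrite (symP xi xi1) => -[y' [x' Kx' [_ xy'_perp]] ey'].
have proj_dot x1 y1 : hdot (x1 - y1) u = 0 -> hdot x1 u = hdot y1 u.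
  by move=> /eqP; rewrite hdotBl subr_eq0 => /eqP.
exists x' => //; rewrite (proj_dot _ _ (xy'_perp u uP)) (proj_dot _ _ (xy_perp u uP)).
by rewrite -[y'](subrK c) ey' hdotDl hdotZl hdotBl addrC.
Qed.

Variables (n : nat) (K : set 'rV[C]_n).
Hypotheses (cK : compact (@realify R n @` K)) (K0 : K !=set0).

Lemma exists_max_Re_hdot u :
  exists2 x0, K x0 & forall x, K x -> complex.Re (hdot x u) <= complex.Re (hdot x0 u).
Proof.
have [_ /set_mem[x0 Kx0 <-] rmax] :=
  EVT_max_rV (image_nonempty _ K0) cK (continuous_subspaceT (rdot_continuous (s := realify u))).
by exists x0 => // y Ky; rewrite !Re_hdot; apply: rmax; rewrite inE; exists y.
Qed.

(* Reflecting through a and then through b translates by 2 (b - a). *)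
Lemma sym_about_unique u a b :
  sym_about (hdot_image K u) a -> sym_about (hdot_image K u) b -> a = b.
Proof.
move=> sa sb; apply/eqP; apply: contraT => ab.
pose w := 2%:R * (b - a).
have w0 : w != 0 by rewrite mulf_neq0 ?pnatr_eq0 // subr_eq0 eq_sym.
have [x0 Kx0 x0max] := exists_max_Re_hdot (w *: u).
have n1 : `|-1 : C| = 1 by rewrite normrN1.
have [x1 Kx1] := sb _ _ n1 (sa _ _ n1 (ex_intro2 _ _ x0 Kx0 erefl)).
have -> : b + -1 * ((a + -1 * (hdot x0 u - a)) - b) = hdot x0 u + w by rewrite /w; ring.
move=> ex1; have := x0max _ Kx1; rewrite !hdotZr ex1.
by have := Re_conjM_addr (hdot x0 u) w0; lra.
Qed.

Lemma exists_hdot_centre :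
  (forall u v, exists c, forall w, w \in (<[u]> + <[v]>)%VS ->
     sym_about (hdot_image K w) (hdot c w)) ->
  exists c, forall u, sym_about (hdot_image K u) (hdot c u).
Proof.
move=> loc.
have in_linesl u v : u \in (<[u]> + <[v]>)%VS := subvP (addvSl _ _) _ (memv_line u).
have in_linesr u v : v \in (<[u]> + <[v]>)%VS := subvP (addvSr _ _) _ (memv_line v).
have centre u : exists a, sym_about (hdot_image K u) a.
  by have [c sc] := loc u u; exists (hdot c u); apply/sc/in_linesl.
pose phi u := sval (cid (centre u)).
have phiP u : sym_about (hdot_image K u) (phi u) := svalP (cid (centre u)).
exists (\row_j phi (delta_mx 0 j)) => u.
rewrite -(@conj_linear_hdotE _ _ phi) //= => {}u v l.
have [c sc] := loc u v.
have phi_hdot w : w \in (<[u]> + <[v]>)%VS -> phi w = hdot c w.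
  by move=> wuv; apply: sym_about_unique (phiP w) (sc w wuv).
by rewrite !phi_hdot ?hdotDr ?hdotZr ?memvD ?memvZ ?in_linesl ?in_linesr.
Qed.

Lemma rotate_mem_of_sym_about c : cconvex K ->
  (forall u, sym_about (hdot_image K u) (hdot c u)) ->
  forall x xi, `|xi| = 1 -> K x -> K (c + xi *: (x - c)).
Proof.
move=> vK sc x xi xi1 Kx; apply: contrapT => Ky.
have notK : ~ (@realify R n @` K) (realify (c + xi *: (x - c))).
  by case=> y Ky' /realify_inj ey; apply: Ky; rewrite -ey.
have [w sep] := compact_convex_separation cK (rconvex_realify vK)
  (image_nonempty _ K0) notK.
have [u uw] := realify_surj w; rewrite -uw in sep.
have [x' Kx' ex'] := sc u (hdot x u) xi xi1 (ex_intro2 _ _ x Kx erefl).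
have := sep _ (ex_intro2 _ _ x' Kx' erefl).
by rewrite -!Re_hdot ex' hdotDl hdotZl hdotBl; lra.
Qed.

End Centres.

Lemma csymmetric_of_rotate_mem (R : realType) n (K : set 'rV[R[i]]_n) c :
  (forall x xi, `|xi| = 1 -> K x -> K (c + xi *: (x - c))) -> csymmetric K.
Proof.
move=> rotK; exists c => A' xi xi1.
have xi0 : xi != 0 by rewrite -normr_eq0 xi1 oner_eq0.
apply/seteqP; split => [_ [_ [x Kx <-] <-] | _ [x Kx <-]].
  by exists (c + xi *: (x - c)); [exact: rotK | rewrite addrC addKr].
exists (xi^-1 *: (x - c)); last by rewrite scalerA mulfV // scale1r.
exists (c + xi^-1 *: (x - c)); last by rewrite addrC addKr.
by apply: rotK => //; rewrite normfV xi1 invr1.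
Qed.

Unset Implicit Arguments.
Theorem theorem2p6 (R : realType) (n k : nat) (hk2 : (2 <= k)%N) (hkn : (k < n)%N)
  (K : set 'rV[R[i]]_n) (hK : convex_body K)
  (hproj : forall P : {vspace 'rV[R[i]]_n}, \dim P = k -> csymmetric (orth_proj P K)) :
  csymmetric K.
Proof.
have [cK vK [r /interior_subset Kr]] := hK.
have K0 : K !=set0 by apply: (nonempty_image (f := @realify R n)); exists r.
have [c sc] : exists c, forall u, sym_about (hdot_image K u) (hdot c u).
  apply: exists_hdot_centre cK K0 _ => u v.
  have [P uvP dP] : exists2 P, ((<[u]> + <[v]>)%VS <= P)%VS & \dim P = k.
    apply: exists_supv_dim; rewrite (leq_trans (dimv_add_lines u v) hk2).
    by rewrite dimvf dim_matrix mul1r ltnW.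
  have [c symP] := hproj P dP.
  by exists c => w /(subvP uvP) wP; apply: sym_about_hdot_image_orth_proj symP wP.
exact: csymmetric_of_rotate_mem (rotate_mem_of_sym_about cK K0 vK sc).
Qed.
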